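(* Let $\mathcal{T}$ be an unrooted tree with leaf set $N=\{1,\dots,n\}$ ($n\ge 3$) in which every internal vertex has degree $3$, and let $\alpha_k\in\mathbb{R}$ be a weight on each edge $k\in E$. Then the Shapley value of the tree game $(N,v_{\mathcal T})$ is a linear function of the edge weights, $\varphi_i(N,v_{\mathcal T})=\sum_{k\in E}\mathbf{M}[i,k]\,\alpha_k$, and its coefficients are given by $$\mathbf{M}[i,k]=\frac{f(i,k)}{n\,c(i,k)}\qquad\text{for all } i\in N,\ k\in E.$$
   Context: An $n$-leaf tree here is an unrooted tree whose leaves are labeled by $N=\{1,\dots,n\}$ and whose internal vertices all have degree 3. Such a tree has $2n-3$ edges: the $n$ leaf edges, each incident to a leaf, and the $n-3$ internal edges $I_1,\dots,I_{n-3}$. Each edge $k\in E$ carries a real weight $\alpha_k$. The tree game $v_{\mathcal T}:2^N\to\mathbb{R}$ assigns to each $S\subseteq N$ the sum of the weights of the edges of the minimal subtree of $\mathcal T$ spanning the leaves in $S$. In particular $v_{\mathcal T}(\emptyset)=0$ and $v_{\mathcal T}(\{i\})=0$. The Shapley value of a cooperative game $(N,v)$ is $$\varphi_i(N,v)=\frac{1}{n!}\sum_{S\subseteq N,\ i\in S}(|S|-1)!\,(n-|S|)!\,\bigl(v(S)-v(S\setminus\{i\})\bigr).$$ Split counts: for a leaf $i$ and an edge $k$, removing $k$ splits $\mathcal T$ into two subtrees. $\mathcal C(i,k)$ is the set of leaves in the subtree containing $i$, and $\mathcal F(i,k)$ is the set of leaves in the other subtree. Their sizes are $c(i,k)=|\mathcal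 C(i,k)|$ and $f(i,k)=|\mathcal F(i,k)|$, so $c(i,k)+f(i,k)=n$. $\mathbf M$ is the $n\times(2n-3)$ matrix of the Shapley transformation. Its rows are indexed by leaves and its columns by edges, in the order leaf edges $1,\dots,n$ followed by internal edges $I_1,\dots,I_{n-3}$. *)

From mathcomp Require Import all_boot all_order all_algebra.
Set Implicit Arguments. Unset Strict Implicit. Unset Printing Implicit Defensive.
Import Order.TTheory GRing.Theory Num.Theory.
Local Open Scope ring_scope.

Section Defs.
Variable T : finType.

Definition edges (e : rel T) : {set {set T}} :=
  [set A | [exists x, exists y, e x y && (A == [set x; y])]].

Definition restrict (e : rel T) (F : {set {set T}}) : rel T :=
  fun x y => e x y && ([set x; y] \in F).

Definition del_edge (e : rel T) (k : {set T}) : rel T :=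
  fun x y => e x y && ([set x; y] != k).

(* Tree = connected simple graph in which every edge is a bridge
   (minimally connected). *)
Definition is_tree (e : rel T) : Prop :=
  [/\ symmetric e, irreflexive e, (forall x y, connect e x y)
    & (forall x y, e x y -> ~~ connect (del_edge e [set x; y]) x y)].

Definition deg (e : rel T) (x : T) : nat := #|[set y | e x y]|.

Definition cubic_leaf_labelled (n : nat) (e : rel T) (leaf : 'I_n -> T) : Prop :=
  injective leaf /\
  (forall x, if x \in codom leaf then deg e x = 1%N else deg e x = 3%N).

Definition spans (n : nat) (e : rel T) (leaf : 'I_n -> T) (S : {set 'I_n})
  (F : {set {set T}}) : bool :=
  [forall i in S, forall j in S, connect (restrict e F) (leaf i) (leaf j)].

Definition min_subtree_edges (n : nat) (e : rel T) (leaf : 'I_n -> T)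
  (S : {set 'I_n}) : {set {set T}} :=
  [set k in edges e | [forall F : {set {set T}}, spans e leaf S F ==> (k \in F)]].

Definition tree_game (R : numDomainType) (n : nat) (e : rel T) (leaf : 'I_n -> T)
  (alpha : {set T} -> R) (S : {set 'I_n}) : R :=
  \sum_(k in min_subtree_edges e leaf S) alpha k.

Definition c_split (n : nat) (e : rel T) (leaf : 'I_n -> T) (i : 'I_n) (k : {set T}) : nat :=
  #|[set j : 'I_n | connect (del_edge e k) (leaf i) (leaf j)]|.
Definition f_split (n : nat) (e : rel T) (leaf : 'I_n -> T) (i : 'I_n) (k : {set T}) : nat :=
  #|[set j : 'I_n | ~~ connect (del_edge e k) (leaf i) (leaf j)]|.
End Defs.

Definition shapley (R : fieldType) (n : nat) (v : {set 'I_n} -> R) (i : 'I_n) : R :=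
  (n`!)%:R^-1 * \sum_(S : {set 'I_n} | i \in S)
     ((#|S|.-1)`! * (n - #|S|)`!)%:R * (v S - v (S :\ i)).

From mathcomp Require Import all_boot all_order all_algebra.
From mathcomp Require Import zify ring.
Import GRing.Theory Num.Theory.
Set Implicit Arguments. Unset Strict Implicit.
Local Open Scope ring_scope.

(* An edge k lies in the minimal subtree spanning S iff deleting k separates
   two leaves of S.  Since deleting an edge of a connected graph leaves at most
   two components, the marginal contribution of i to S is the sum of the
   weights of the edges k for which S \ {i} is a nonempty set of leaves all
   lying on the far side of k from i.  Summing the Shapley weights over these S
   depends only on the number f of leaves on the far side: the weights of all
   T \subset far side add up to 1 / (n - f) by the hockey-stick identity, and
   removing T = {} leaves 1 / (n - f) - 1 / n = f / (n (n - f)). *)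

Section EdgeDeletion.
Variables (T : finType) (e : rel T).

Lemma del_edge_sym k : symmetric e -> symmetric (del_edge e k).
Proof. by move=> e_sym x y; rewrite /del_edge e_sym setUC. Qed.

Lemma connect_del_edge_ends x y z : connect e z x ->
  connect (del_edge e [set x; y]) z x || connect (del_edge e [set x; y]) z y.
Proof.
move=> /connectP[p]; elim: p z => [|a p IH] z /=; first by move=> _ ->; rewrite connect0.
move=> /andP[eza pp] xE; have [E|E] := eqVneq [set z; a] [set x; y].
  have : z \in [set x; y] by rewrite -E !inE eqxx.
  by rewrite !inE => /orP[] /eqP ->; rewrite connect0 ?orbT.
have za : del_edge e [set x; y] z a by rewrite /del_edge eza E.
by case/orP: (IH a pp xE) => H; rewrite (connect_trans (connect1 za) H) ?orbT.
Qed.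

Lemma restrict_edges_setD1 k : restrict e (edges e :\ k) =2 del_edge e k.
Proof.
move=> x y; rewrite /restrict /del_edge in_setD1; case exy: (e x y) => //=.
suff -> : [set x; y] \in edges e by rewrite andbT.
by rewrite inE; apply/existsP; exists x; apply/existsP; exists y; rewrite exy eqxx.
Qed.

Variables (n : nat) (leaf : 'I_n -> T).

Definition separates k (S : {set 'I_n}) : bool :=
  [exists a in S, exists b in S, ~~ connect (del_edge e k) (leaf a) (leaf b)].

Lemma mem_min_subtree_edges k S : k \in edges e ->
  (k \in min_subtree_edges e leaf S) = separates k S.
Proof.
move=> ke; rewrite /min_subtree_edges inE ke; apply/forallP/idP => [spanned | ].
  have [//|not_sep] := boolP (separates k S).
  suff : spans e leaf S (edges e :\ k) by move/(implyP (spanned _)); rewrite !inE eqxx.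
  apply/forallP => a; apply/implyP => aS; apply/forallP => b; apply/implyP => bS.
  rewrite (eq_connect (restrict_edges_setD1 k)); apply/negPn/negP => nab.
  move/negP: not_sep; apply; apply/existsP; exists a; rewrite aS.
  by apply/existsP; exists b; rewrite bS.
move=> /existsP[a /andP[aS /existsP[b /andP[bS nab]]]] F; apply/implyP => spanF.
apply: contraNT nab => kF; move/forallP/(_ a)/implyP/(_ aS): spanF.
move/forallP/(_ b)/implyP/(_ bS); apply: connect_sub => x y /andP[exy xyF].
by apply: connect1; rewrite /del_edge exy; apply: contraNneq kF => <-.
Qed.

Lemma tree_game_separates (R : numDomainType) (alpha : {set T} -> R) S :
  tree_game e leaf alpha S = \sum_(k in edges e) (separates k S)%:R * alpha k.
Proof.
rewrite /tree_game big_mkcond [RHS]big_mkcond; apply: eq_bigr => k _.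
case ke: (k \in edges e); last by rewrite /min_subtree_edges inE ke.
by rewrite mem_min_subtree_edges //; case: (separates k S); rewrite ?mul1r ?mul0r.
Qed.

Lemma c_split_add_f_split i k : (c_split e leaf i k + f_split e leaf i k)%N = n.
Proof.
rewrite -[RHS](card_ord n) -(cardsC [set j | ~~ connect (del_edge e k) (leaf i) (leaf j)]).
by rewrite addnC; congr (_ + _)%N; apply: eq_card => j; rewrite !inE negbK.
Qed.

Section Marginal.
Hypotheses (e_sym : symmetric e) (e_conn : forall x y, connect e x y).
Variable i : 'I_n.

Definition far_side k : {set 'I_n} :=
  [set j | ~~ connect (del_edge e k) (leaf i) (leaf j)].

Definition far_nonempty k (S : {set 'I_n}) : bool :=
  (S :\ i \subset far_side k) && (S :\ i != set0).

Lemma far_side_connected k a b : k \in edges e ->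
  a \in far_side k -> b \in far_side k -> connect (del_edge e k) (leaf a) (leaf b).
Proof.
rewrite inE => /existsP[x /existsP[y /andP[_ /eqP ->]]]; rewrite !inE => nia nib.
have sym_conn := sym_connect_sym (del_edge_sym [set x; y] e_sym).
have ends z := @connect_del_edge_ends x y z (e_conn z x).
have join z1 z2 w : connect (del_edge e [set x; y]) z1 w ->
    connect (del_edge e [set x; y]) z2 w -> connect (del_edge e [set x; y]) z1 z2.
  by move=> h1 h2; apply: connect_trans h1 _; rewrite sym_conn.
case/orP: (ends (leaf i)) => hi; case/orP: (ends (leaf a)) => ha;
  case/orP: (ends (leaf b)) => hb; first [ exact: join hb | exact: join ha hb
  | by rewrite (join _ _ _ hi ha) in nia | by rewrite (join _ _ _ hi hb) in nib ].
Qed.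

Lemma separates_setD1 k (S : {set 'I_n}) : i \in S ->
  separates k S = separates k (S :\ i) || far_nonempty k S.
Proof.
move=> iS; have subS := subsetP (subD1set S i).
have far b : b \in S :\ i -> ~~ connect (del_edge e k) (leaf i) (leaf b) ->
    separates k (S :\ i) || far_nonempty k S.
  move=> bS nib; have [sub|] := boolP (S :\ i \subset far_side k).
    by apply/orP; right; rewrite /far_nonempty sub /=; apply/set0Pn; exists b.
  case/subsetPn=> j jS; rewrite inE negbK => cij; apply/orP; left.
  apply/existsP; exists j; rewrite jS; apply/existsP; exists b; rewrite bS.
  by apply: contra nib; apply: connect_trans.
apply/idP/idP => [/existsP[a /andP[aS /existsP[b /andP[bS nab]]]] | /orP[]].
- have [ai | ai] := eqVneq a i.
    subst a; apply: (far b) => //; rewrite !inE bS andbT.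
    by apply: contraNneq nab => ->; apply: connect0.
  have [bi | bi] := eqVneq b i.
    subst b; apply: (far a); first by rewrite !inE ai.
    by rewrite (sym_connect_sym (del_edge_sym k e_sym)).
  apply/orP; left; apply/existsP; exists a; rewrite !inE ai aS.
  by apply/existsP; exists b; rewrite !inE bi bS.
- move=> /existsP[a /andP[aS /existsP[b /andP[bS nab]]]].
  by apply/existsP; exists a; rewrite subS //; apply/existsP; exists b; rewrite subS.
- move=> /andP[/subsetP sub /set0Pn[b bS]]; apply/existsP; exists i; rewrite iS.
  by apply/existsP; exists b; rewrite subS //; move: (sub b bS); rewrite inE.
Qed.

Lemma separates_setD1_excl k (S : {set 'I_n}) : k \in edges e ->
  separates k (S :\ i) -> ~~ far_nonempty k S.
Proof.
move=> ke /existsP[a /andP[aS /existsP[b /andP[bS nab]]]].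
apply: contra nab => /andP[/subsetP sub _].
exact: far_side_connected (sub a aS) (sub b bS).
Qed.

Lemma tree_game_marginal (R : numDomainType) (alpha : {set T} -> R) (S : {set 'I_n}) :
  i \in S ->
  tree_game e leaf alpha S - tree_game e leaf alpha (S :\ i) =
  \sum_(k in edges e) (far_nonempty k S)%:R * alpha k.
Proof.
move=> iS; rewrite !tree_game_separates -sumrB; apply: eq_bigr => k ke.
rewrite -mulrBl separates_setD1 //.
case: (boolP (separates k (S :\ i))) => [sep|]; last by rewrite subr0.
by rewrite (negbTE (separates_setD1_excl ke sep)) subrr.
Qed.

End Marginal.
End EdgeDeletion.

Lemma sum_bin_hockey_stick d f : (\sum_(t < f.+1) 'C(f - t + d, d) = 'C(f + d + 1, d.+1))%N.
Proof.
elim: f => [|f IH]; first by rewrite big_ord1 add0n addn1 !binn.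
rewrite big_ord_recl /= subn0.
under eq_bigr => t _ do rewrite /bump /= add1n subSS.
by rewrite IH [in RHS]addSn [in RHS]addSn binS addn1 addnC.
Qed.

Lemma bin_fact_split f d t : (t <= f)%N ->
  ('C(f, t) * (t`! * (f + d - t)`!) = f`! * d`! * 'C(f - t + d, d))%N.
Proof.
move=> tf; apply/eqP; rewrite -(eqn_pmul2r (fact_gt0 (f - t))); apply/eqP.
have bin_f := bin_fact tf.
have bin_fd := @bin_fact (f - t + d) d (leq_addl _ _); rewrite addnK in bin_fd.
have -> : (f + d - t = f - t + d)%N by lia.
rewrite -bin_fd -bin_f; ring.
Qed.

Lemma sum_bin_fact f d :
  (d.+1 * \sum_(t < f.+1) 'C(f, t) * (t`! * (f + d.+1 - t.+1)`!) = (f + d.+1)`!)%N.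
Proof.
under eq_bigr => t _ do rewrite addnS subSS (@bin_fact_split f d t (ltn_ord t)).
rewrite -big_distrr /= sum_bin_hockey_stick.
have := @bin_fact (f + d + 1) d.+1; rewrite addn1 ltnS leq_addl.
have -> : ((f + d).+1 - d.+1 = f)%N by lia.
by rewrite addnS => /(_ isT) <-; rewrite factS; ring.
Qed.

Section ShapleyWeights.
Variables (R : numFieldType) (n : nat) (i : 'I_n) (D : {set 'I_n}).
Hypothesis iD : i \notin D.

Let W t : R := (t`! * (n - t.+1)`!)%:R.

Lemma sum_weight_setD1 :
  \sum_(S : {set 'I_n} | i \in S)
     ((#|S|.-1)`! * (n - #|S|)`!)%:R * ((S :\ i \subset D) && (S :\ i != set0))%:R
  = \sum_(S : {set 'I_n} | S \subset D) W #|S| * (S != set0)%:R.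
Proof.
rewrite (reindex_onto (fun S => i |: S) (fun S => S :\ i)) => [|S iS]; last first.
  by rewrite setD1K.
rewrite big_mkcond [RHS]big_mkcond; apply: eq_bigr => S _.
have [SD|nSD] := boolP (S \subset D); last first.
  by case: ifP => // /andP[_ /eqP ->]; rewrite (negbTE nSD) mulr0.
have iS : i \notin S by apply: contra iD => /(subsetP SD).
by rewrite setU11 setU1K // eqxx SD cardsU1 iS add1n.
Qed.

Lemma sum_weight_subset :
  \sum_(S : {set 'I_n} | S \subset D) W #|S| = \sum_(t < #|D|.+1) W t *+ 'C(#|D|, t).
Proof.
pose size_of (S : {set 'I_n}) : 'I_#|D|.+1 := inord #|S|.
rewrite (partition_big size_of xpredT) //=; apply: eq_bigr => t _.
have cardS (S : {set 'I_n}) : S \subset D -> val (size_of S) = #|S|.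
  by move=> SD; rewrite /size_of /= inordK // ltnS subset_leq_card.
rewrite (eq_bigr (fun=> W t)) => [|S /andP[SD /eqP <-]]; last by rewrite cardS.
rewrite sumr_const -cards_draws; congr (_ *+ _); apply: eq_card => S.
rewrite !inE unfold_in /=; case SD: (S \subset D) => //=; by rewrite -val_eqE cardS.
Qed.

Lemma shapley_weight_far_nonempty :
  (n`!)%:R^-1 * \sum_(S : {set 'I_n} | i \in S)
     ((#|S|.-1)`! * (n - #|S|)`!)%:R * ((S :\ i \subset D) && (S :\ i != set0))%:R
  = #|D|%:R / (n%:R * (n - #|D|)%:R) :> R.
Proof.
rewrite sum_weight_setD1.
have -> : \sum_(S : {set 'I_n} | S \subset D) W #|S| * (S != set0)%:R
    = \sum_(S : {set 'I_n} | S \subset D) W #|S| - W 0.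
  rewrite [in RHS](bigD1 set0) ?sub0set //= (bigD1 set0) ?sub0set //= eqxx mulr0.
  rewrite cards0 add0r addrC addrK; apply: eq_bigr => S /andP[_ ->]; exact: mulr1.
rewrite sum_weight_subset; set f := #|D|.
have [d nE] : exists d, n = (f + d.+1)%N.
  have := cardsC D; rewrite card_ord => cardDC.
  have : (0 < #|~: D|)%N by apply/card_gt0P; exists i; rewrite inE.
  by exists #|~: D|.-1; rewrite /f; lia.
have -> : \sum_(t < f.+1) W t *+ 'C(f, t)
    = (\sum_(t < f.+1) 'C(f, t) * (t`! * (n - t.+1)`!))%:R.
  by rewrite natr_sum; apply: eq_bigr => t _; rewrite natrM mulr_natl.
set Y := (\sum_(t < f.+1) _)%N.
have nY : (d.+1 * Y = n`!)%N by rewrite /Y nE sum_bin_fact.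
have nF : n`! = (n * (n - 1)`!)%N by rewrite nE addnS factS subn1.
have -> : (n - f = d.+1)%N by lia.
have d_neq0 : (d.+1)%:R != 0 :> R by rewrite pnatr_eq0.
have fact_neq0 : ((n - 1)`!)%:R != 0 :> R by rewrite pnatr_eq0 -lt0n fact_gt0.
have n_neq0 : n%:R != 0 :> R by rewrite pnatr_eq0 nE addnS.
have -> : Y%:R = (n`!)%:R / (d.+1)%:R :> R.
  by rewrite -nY natrM [_ * Y%:R]mulrC mulfK.
have nR : n%:R = f%:R + (d.+1)%:R :> R by rewrite nE natrD.
rewrite /W fact0 mul1n nF natrM nR; rewrite nR in n_neq0.
by field; rewrite nat1r n_neq0 d_neq0 fact_neq0.
Qed.

End ShapleyWeights.

Theorem theorem4 (R : realFieldType) (n : nat) (T : finType) (e : rel T)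
  (leaf : 'I_n -> T) (alpha : {set T} -> R) :
  (3 <= n)%N -> is_tree e -> cubic_leaf_labelled e leaf ->
  forall i : 'I_n,
    shapley (tree_game e leaf alpha) i =
    \sum_(k in edges e)
       ((f_split e leaf i k)%:R / (n%:R * (c_split e leaf i k)%:R)) * alpha k.
Proof.
move=> _ [e_sym _ e_conn _] _ i; rewrite /shapley.
under eq_bigr => S iS do rewrite (tree_game_marginal leaf e_sym e_conn alpha iS) mulr_sumr.
rewrite exchange_big mulr_sumr; apply: eq_bigr => k _.
under eq_bigr => S _ do rewrite mulrA.
rewrite -mulr_suml mulrA; congr (_ * _).
have iD : i \notin far_side e leaf i k by rewrite inE negbK connect0.
have -> : c_split e leaf i k = (n - f_split e leaf i k)%N.
  by have := c_split_add_f_split e leaf i k; lia.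
exact: shapley_weight_far_nonempty.
Qed.
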